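(* Let $f:2^V\to\mathbb{R}_+$ be a nonnegative, normalized ($f(\emptyset)=0$) supermodular function that is $r$-decomposable, and let $k$ be an integer with $r<k\le n-1$. Run greedy peeling: $S_n\gets V$; for $i=n,\dots,k+1$, choose $v_i\in\arg\min_{v\in S_i}f(v\mid S_i\setminus\{v\})$ and set $S_{i-1}\gets S_i\setminus\{v_i\}$. Then for all integers $i,j$ with $k\le i\le j\le n$, $$f(S_i)\ \ge\ \frac{\binom{i}{r}}{\binom{j}{r}}\,f(S_j)\ \ge\ \frac{r!}{r^r}\cdot\frac{i^r}{j^r}\,f(S_j).$$
   Context: $V$ is a finite set with $n=|V|$; $f(v\mid S)=f(S\cup\{v\})-f(S)$. Supermodular: $f(A)+f(B)\le f(A\cup B)+f(A\cap B)$ for all $A,B\subseteq V$. $f$ is $r$-decomposable if there exist subsets $V_1,\dots,V_m\subseteq V$ with $|V_i|\le r$ and nonnegative supermodular $f_i:2^{V_i}\to\mathbb{R}_+$ with $f(S)=\sum_i f_i(S\cap V_i)$ for all $S\subseteq V$. *)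

From HB Require Import structures.
From mathcomp Require Import all_boot all_order all_algebra.
Set Implicit Arguments. Unset Strict Implicit. Unset Printing Implicit Defensive.
Import Order.TTheory GRing.Theory Num.Theory.
Local Open Scope ring_scope.

Definition marg (R : numDomainType) (V : finType) (f : {set V} -> R)
  (v : V) (S : {set V}) : R := f (v |: S) - f S.

Definition supermodular (R : numDomainType) (V : finType) (f : {set V} -> R) :=
  forall A B : {set V}, f A + f B <= f (A :|: B) + f (A :&: B).

Definition supermodular_on (R : numDomainType) (V : finType) (W : {set V})
  (g : {set V} -> R) :=
  forall A B : {set V}, A \subset W -> B \subset W ->
    g A + g B <= g (A :|: B) + g (A :&: B).

(* r-decomposable: f(S) = sum_i f_i (S ∩ V_i), |V_i| <= r, each f_i : 2^{V_i} -> R_+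
   nonnegative and supermodular.  f_i is represented as a function on {set V}
   of which only the values on subsets of V_i matter. *)
Definition decomposable (R : numDomainType) (V : finType) (r : nat)
  (f : {set V} -> R) :=
  exists (m : nat) (Vs : 'I_m -> {set V}) (fs : 'I_m -> {set V} -> R),
    [/\ forall i, (#|Vs i| <= r)%N,
        forall i (A : {set V}), A \subset Vs i -> 0 <= fs i A,
        forall i, supermodular_on (Vs i) (fs i)
      & forall S : {set V}, f S = \sum_(i < m) fs i (S :&: Vs i)].

Definition greedy_peeling (R : numDomainType) (V : finType) (f : {set V} -> R)
  (k : nat) (S : nat -> {set V}) :=
  S #|V| = [set: V] /\
  forall i : nat, (k < i <= #|V|)%N ->
    exists2 v, v \in S i &
      (forall u, u \in S i -> marg f v (S i :\ v) <= marg f u (S i :\ u)) /\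
      S i.-1 = S i :\ v.

From HB Require Import structures.
From mathcomp Require Import all_boot all_order all_algebra.
From mathcomp Require Import ring zify.
Set Implicit Arguments. Unset Strict Implicit. Unset Printing Implicit Defensive.
Import Order.TTheory GRing.Theory Num.Theory.
Local Open Scope ring_scope.

(* Write f = sum_t f_t(. :&: V_t).  The marginal f(u | A \ u) splits into the
   marginals of the components; that of f_t vanishes unless u \in V_t, and is
   at most f_t(A :&: V_t) by nonnegativity.  Summing over u \in A therefore
   counts each f_t(A :&: V_t) at most |V_t| <= r times, so the greedy minimiser
   on |S_{j+1}| = j+1 elements has marginal at most r f(S_{j+1}) / (j+1), i.e.
   f(S_j) >= (1 - r/(j+1)) f(S_{j+1}) = C(j,r)/C(j+1,r) f(S_{j+1}): the
   normalised value f(S_j) / C(j,r) does not increase with j.  For the second bound, C(i,r)/C(j,r) =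
   (i^_r / i^r) (i^r / j^_r), where j^_r <= j^r and i^_r / i^r >= r^_r / r^r
   = r!/r^r because i |-> i^_r / i^r is nondecreasing. *)

Section Decomposition.
Variables (R : numDomainType) (V : finType).

Lemma sum_marg_component_le (g : {set V} -> R) (W A : {set V}) (r : nat) :
  (forall B : {set V}, B \subset W -> 0 <= g B) -> (#|W| <= r)%N ->
  \sum_(u in A) (g (A :&: W) - g ((A :\ u) :&: W)) <= g (A :&: W) *+ r.
Proof.
move=> g_ge0 cardW; have gA_ge0 := g_ge0 _ (subsetIr A W).
rewrite (bigID (mem W)) /= [X in _ + X]big1 ?addr0; last first.
  move=> u /andP[_ uW]; rewrite (_ : (A :\ u) :&: W = A :&: W) ?subrr //.
  apply/setP => x; rewrite !inE.
  by case: (eqVneq x u) => [->|//]; rewrite (negbTE uW) !andbF.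
apply: le_trans (_ : \sum_(u in A | u \in W) g (A :&: W) <= _).
  by apply: ler_sum => u _; rewrite lerBlDr lerDl g_ge0 ?subsetIr.
rewrite sumr_const (ler_wpMn2l gA_ge0) // (leq_trans _ cardW) //.
by apply: subset_leq_card; apply/subsetP => u; rewrite unfold_in => /andP[].
Qed.

Lemma sum_marg_le_decomposable (f : {set V} -> R) (r : nat) (A : {set V}) :
  decomposable r f -> \sum_(u in A) marg f u (A :\ u) <= f A *+ r.
Proof.
case=> m [Vs [fs [cardVs fs_ge0 _ f_sum]]].
have margE u : u \in A ->
    marg f u (A :\ u) = \sum_(t < m) (fs t (A :&: Vs t) - fs t ((A :\ u) :&: Vs t)).
  by move=> uA; rewrite /marg setD1K // !f_sum -sumrB.
rewrite (eq_bigr _ margE) exchange_big /= f_sum -sumrMnl.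
by apply: ler_sum => t _; exact: sum_marg_component_le (fs_ge0 t) (cardVs t).
Qed.

End Decomposition.

Lemma bin_ratio_step (R : numFieldType) (r j : nat) (F m : R) :
  (r <= j)%N -> m *+ j.+1 <= F *+ r ->
  F / 'C(j.+1, r)%:R <= (F - m) / 'C(j, r)%:R.
Proof.
move=> le_rj le_mF.
have binS_gt0 : (0 : R) < 'C(j.+1, r)%:R by rewrite ltr0n bin_gt0 ltnW.
have bin_j_gt0 : (0 : R) < 'C(j, r)%:R by rewrite ltr0n bin_gt0.
have mul_binS : j.+1%:R * 'C(j, r)%:R = (j.+1%:R - r%:R) * 'C(j.+1, r)%:R :> R.
  by rewrite -natrB 1?ltnW // -!natrM -mul_bin_down.
rewrite ler_pdivrMr // mulrAC ler_pdivlMr // -(ler_pM2l (ltr0Sn R j)).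
rewrite mulrCA mul_binS !mulrA ler_pM2r // -subr_ge0.
have -> : j.+1%:R * (F - m) - F * (j.+1%:R - r%:R) = F *+ r - m *+ j.+1 :> R.
  by rewrite -[F *+ r]mulr_natr -[m *+ _]mulr_natr; ring.
by rewrite subr_ge0.
Qed.

Section GreedyPeeling.
Variables (R : numFieldType) (V : finType) (f : {set V} -> R).
Variables (k : nat) (S : nat -> {set V}).
Hypothesis peelS : greedy_peeling f k S.

Lemma card_greedy_peeling i : (k <= i <= #|V|)%N -> #|S i| = i.
Proof.
case: peelS => SV peel_step.
suff card_top d : (d <= #|V| - k)%N -> #|S (#|V| - d)%N| = (#|V| - d)%N.
  by move=> /andP[ki iV]; rewrite -(subKn iV) card_top ?leq_sub2l.
elim: d => [|d IH] le_dk; first by rewrite subn0 SV cardsT.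
rewrite subnS; have [v vS [_ ->]] := peel_step (#|V| - d)%N ltac:(lia).
by have := IH ltac:(lia); rewrite (cardsD1 v) vS add1n; lia.
Qed.

Lemma greedy_peeling_bin_step r j : decomposable r f ->
  (r <= j)%N -> (k <= j < #|V|)%N ->
  f (S j.+1) / 'C(j.+1, r)%:R <= f (S j) / 'C(j, r)%:R.
Proof.
move=> decf le_rj /andP[kj jV].
have cardS : #|S j.+1| = j.+1 by apply: card_greedy_peeling; lia.
case: peelS => _ peel_step.
have [v vS [vmin ->]] := peel_step j.+1 ltac:(lia).
have -> : f (S j.+1 :\ v) = f (S j.+1) - marg f v (S j.+1 :\ v).
  by rewrite /marg setD1K // subKr.
apply: bin_ratio_step => //.
apply: le_trans (sum_marg_le_decomposable (S j.+1) decf).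
rewrite -[in X in _ *+ X]cardS -sumr_const.
by apply: ler_sum => u uS; exact: vmin.
Qed.

Lemma greedy_peeling_bin_ratio r i j : decomposable r f ->
  (r <= k)%N -> (k <= i)%N -> (i <= j <= #|V|)%N ->
  'C(i, r)%:R / 'C(j, r)%:R * f (S j) <= f (S i).
Proof.
move=> decf le_rk ki /andP[ij jV].
have normalized_noninc : {in [pred l | k <= l <= #|V|]%N &,
    {homo (fun l => f (S l) / 'C(l, r)%:R) : l l' /~ (l <= l')%O}}.
  apply: Order.NatMonotonyTheory.nonincn_inP => [l l' + + m|l].
    by rewrite !inE => /andP[kl _] /andP[_ l'V] /andP[/ltnW lm /ltnW ml']; lia.
  rewrite !inE => /andP[kl _] /andP[_ lV].
  apply: greedy_peeling_bin_step decf _ _; lia.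
have bin_i_gt0 : (0 : R) < 'C(i, r)%:R by rewrite ltr0n bin_gt0; lia.
rewrite mulrAC -mulrA -ler_pdivlMl // [X in _ <= X]mulrC.
apply: normalized_noninc => //; rewrite inE; lia.
Qed.

End GreedyPeeling.

Lemma ffact_leq_expn n m : (n ^_ m <= n ^ m)%N.
Proof.
elim: m => [|m IH]; first by rewrite ffactn0 expn0.
by rewrite ffactnSr expnS mulnC leq_mul ?leq_subr.
Qed.

Lemma expn_ffact_cross_le r i m : (r <= i)%N ->
  (i ^ m * r ^_ m <= r ^ m * i ^_ m)%N.
Proof.
move=> le_ri; elim: m => [|m IH]; first by rewrite !ffactn0 !expn0.
rewrite !ffactnSr !expnSr mulnACA [(r ^ m * r * _)%N]mulnACA.
by apply: leq_mul IH _; nia.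
Qed.

Lemma bin_ratio_ge_expn_ratio (R : numFieldType) r i j : (r <= i <= j)%N ->
  r`!%:R / r%:R ^+ r * (i%:R ^+ r / j%:R ^+ r) <= 'C(i, r)%:R / 'C(j, r)%:R :> R.
Proof.
move=> /andP[ri ij].
have fact_bin_j : (r`! * 'C(j, r) <= j ^ r)%N.
  by rewrite mulnC bin_ffact ffact_leq_expn.
have expn_bin_i : (i ^ r * r`! <= r ^ r * ('C(i, r) * r`!))%N.
  by rewrite bin_ffact -ffactnn expn_ffact_cross_le.
rewrite mulnA leq_pmul2r ?fact_gt0 // in expn_bin_i.
have expr_gt0 n : (r <= n)%N -> (0 : R) < n%:R ^+ r.
  by move=> rn; rewrite -natrX ltr0n expn_gt0; lia.
rewrite mulf_div ler_pdivrMr ?mulr_gt0 ?expr_gt0 ?(leq_trans ri ij) //.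
rewrite mulrAC ler_pdivlMr ?ltr0n ?bin_gt0 ?(leq_trans ri ij) //.
rewrite -!natrX -!natrM ler_nat.
by have := leq_mul expn_bin_i fact_bin_j; lia.
Qed.

Theorem lemma1 (R : realFieldType) (V : finType) (f : {set V} -> R)
  (r k : nat) (S : nat -> {set V}) :
  (forall A : {set V}, 0 <= f A) ->
  f set0 = 0 ->
  supermodular f ->
  decomposable r f ->
  (r < k)%N -> (k <= #|V| - 1)%N ->
  greedy_peeling f k S ->
  forall i j : nat, (k <= i)%N -> (i <= j)%N -> (j <= #|V|)%N ->
    ('C(i, r)%:R / 'C(j, r)%:R) * f (S j) <= f (S i) /\
    (r`!%:R / r%:R ^+ r) * (i%:R ^+ r / j%:R ^+ r) * f (S j)
      <= ('C(i, r)%:R / 'C(j, r)%:R) * f (S j).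
Proof.
move=> f_ge0 _ _ decf lt_rk _ peelS i j ki ij jV; split.
  by apply: greedy_peeling_bin_ratio decf _ ki _ => //; lia.
by rewrite ler_wpM2r // bin_ratio_ge_expn_ratio //; lia.
Qed.
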